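(* Let $\phi:\mathcal M_1\to\mathcal M_2$ be a homomorphism of local Moufang sets, with $\mathcal M_1=(X,(U_x))$, and let $\theta_x:U_x\to V_{x\phi}$ ($x\in X$) be the induced group homomorphisms. The following are equivalent: (i) $\phi$ is injective; (ii) $\theta_x$ is injective for all $x\in X$; (iii) $\theta_x$ is injective for some $x\in X$.
   Context: Group actions are right actions; maps are composed left to right, so $u\phi$ means first $u$ then $\phi$. For $(X,\sim)$, $\overline x$ is the class of $x$, $\overline X$ the set of classes, $\mathrm{Sym}(X,\sim)$ the bijections $g$ with $x\sim y\iff xg\sim yg$, $\overline U$ the induced group on $\overline X$. A local Moufang set is $(X,\sim)$ with $|\overline X|>2$ and subgroups $U_x\le\mathrm{Sym}(X,\sim)$ ($x\in X$) with: (LM0) $x\sim y\Rightarrow\overline{U_x}=\overline{U_y}$; (LM1) $U_x$ fixes $x$ and is sharply transitive on $X\setminus\overline x$; (LM1') $\overline{U_x}$ fixes $\overline x$ and is sharply transitive on $\overline X\setminus\{\overline x\}$; (LM2) $U_x^g=U_{xg}$ for all $x$ and all $g\in\langle U_y\rangle$, where $g^h=h^{-1}gh$. A homomorphism $\mathcal M_1=(X,(U_x))\to\mathcal M_2=(Y,(V_y))$ is a map $\phi:X\to Y$ such that $x\sim x'\iff x\phi\sim x'\phi$ for all $x,x'\in X$, and $U_x\phi\subseteq\phi V_{x\phi}$ for all $x$. For each $x\in X$ the induced map $\theta_x:U_x\to V_{x\phi}$ is the unique map with $u\phi=\phi\,\theta_x(u)$ for all $u\in U_x$ (it exists and is a group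 homomorphism). *)

From Stdlib Require Import Classical FunctionalExtensionality.
From Stdlib Require Import Classes.RelationClasses.

(* Conventions: a permutation g of X is a function X -> X; the right action
   x g is written (g x).  Composition is left to right, so "u phi"
   (first u, then phi) is the function  fun z => phi (u z). *)

Section LocalMoufang.
Variable X : Type.
Variable R : X -> X -> Prop.

Definition in_Sym (g : X -> X) : Prop :=
  (forall a b, g a = g b -> a = b) /\ (forall b, exists a, g a = b) /\
  (forall a b, R a b <-> R (g a) (g b)).

Definition subgroup_Sym (U : (X -> X) -> Prop) : Prop :=
  (forall g, U g -> in_Sym g) /\
  U (fun z => z) /\
  (forall g h, U g -> U h -> U (fun z => h (g z))) /\
  (forall g, U g -> exists h, U h /\ forall z, h (g z) = z /\ g (h z) = z).

(* u and v induce the same permutation of the set of classes X/~ *)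
Definition same_bar (u v : X -> X) : Prop := forall z, R (u z) (v z).

Inductive gen (U : X -> (X -> X) -> Prop) : (X -> X) -> Prop :=
| gen_id : gen U (fun z => z)
| gen_U : forall y u, U y u -> gen U u
| gen_comp : forall g h, gen U g -> gen U h -> gen U (fun z => h (g z)).

Definition is_local_moufang_set (U : X -> (X -> X) -> Prop) : Prop :=
  Equivalence R /\
  (exists a b c, ~ R a b /\ ~ R a c /\ ~ R b c) /\
  (forall x, subgroup_Sym (U x)) /\
  (forall x y, R x y ->
     (forall u, U x u -> exists v, U y v /\ same_bar u v) /\
     (forall v, U y v -> exists u, U x u /\ same_bar u v)) /\
  (forall x, (forall u, U x u -> u x = x) /\
     (forall y z, ~ R x y -> ~ R x z -> exists u, U x u /\ u y = z) /\
     (forall y u1 u2, ~ R x y -> U x u1 -> U x u2 -> u1 y = u2 y -> u1 = u2)) /\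
  (forall x, (forall u, U x u -> R (u x) x) /\
     (forall y z, ~ R x y -> ~ R x z -> exists u, U x u /\ R (u y) z) /\
     (forall y u1 u2, ~ R x y -> U x u1 -> U x u2 -> R (u1 y) (u2 y) ->
        same_bar u1 u2)) /\
  (* LM2: U_x^g = U_{xg} for g in <U_y>; v = g^-1 u g  iff  v(g z) = g(u z) *)
  (forall g, gen U g -> forall x v,
     U (g x) v <-> exists u, U x u /\ forall z, v (g z) = g (u z)).

End LocalMoufang.

Arguments in_Sym {X}.
Arguments subgroup_Sym {X}.
Arguments same_bar {X}.
Arguments is_local_moufang_set {X}.

Definition is_lm_hom {X Y : Type} (R : X -> X -> Prop) (S : Y -> Y -> Prop)
  (U : X -> (X -> X) -> Prop) (V : Y -> (Y -> Y) -> Prop) (phi : X -> Y) : Prop :=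
  (forall x x', R x x' <-> S (phi x) (phi x')) /\
  (forall x u, U x u -> exists v, V (phi x) v /\ forall z, phi (u z) = v (phi z)).

(* theta_x(u) = v  iff  u phi = phi v  (with v in V_{x phi}); theta_x is the
   unique such map, so it is described by its graph. *)
Definition theta_graph {X Y : Type} (V : Y -> (Y -> Y) -> Prop) (phi : X -> Y)
  (x : X) (u : X -> X) (v : Y -> Y) : Prop :=
  V (phi x) v /\ forall z, phi (u z) = v (phi z).

Definition theta_injective {X Y : Type} (U : X -> (X -> X) -> Prop)
  (V : Y -> (Y -> Y) -> Prop) (phi : X -> Y) (x : X) : Prop :=
  forall u1 u2 v, U x u1 -> U x u2 ->
    theta_graph V phi x u1 v -> theta_graph V phi x u2 v -> u1 = u2.

Definition injective {A B : Type} (f : A -> B) : Prop :=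
  forall a b, f a = f b -> a = b.

(* If theta_x is injective, a point a off the class of x is separated from
   every b by phi: transitivity of U_x gives u in U_x with u a = b, and if
   phi a = phi b then theta_x(u) fixes the point phi a off the class of x phi,
   so it is trivial by sharp transitivity of V_{x phi}, whence u = 1 and a = b.
   A point of the class of x is first moved off that class by a root group U_z
   with z in a third class; the converse direction is immediate since
   u phi = phi theta_x(u) determines u when phi is injective. *)
From Stdlib Require Import Classical FunctionalExtensionality.
From Stdlib Require Import Classes.RelationClasses.

Lemma exists_classes_triangle (X : Type) (R : X -> X -> Prop) (HE : Equivalence R)
  (c1 c2 c3 : X) (h12 : ~ R c1 c2) (h13 : ~ R c1 c3) (h23 : ~ R c2 c3) (x : X) :
  exists z t, ~ R z x /\ ~ R z t /\ ~ R x t.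
Proof.
  destruct (classic (R x c1)) as [H1|H1].
  - exists c2, c3; repeat split; [| exact h23 |].
    + intro H. apply h12. now rewrite <- H1, H.
    + intro H. apply h13. now rewrite <- H1.
  - destruct (classic (R x c2)) as [H2|H2].
    + exists c1, c3; repeat split; [| exact h13 |].
      * intro H. apply h12. now rewrite H.
      * intro H. apply h23. now rewrite <- H2.
    + exists c1, c2; repeat split; [| exact h12 | exact H2].
      intro H. apply H1. now symmetry.
Qed.

Section LocalMoufangHomomorphism.

Variables (X Y : Type) (R : X -> X -> Prop) (S : Y -> Y -> Prop)
  (U : X -> (X -> X) -> Prop) (V : Y -> (Y -> Y) -> Prop) (phi : X -> Y).

Lemma theta_injective_of_injective :
  injective phi -> forall x, theta_injective U V phi x.
Proof.
  intros Hinj x u1 u2 v _ _ [_ H1] [_ H2].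
  apply functional_extensionality; intro z.
  apply Hinj. now rewrite H1, H2.
Qed.

Hypotheses (HM1 : is_local_moufang_set R U) (HM2 : is_local_moufang_set S V)
  (Hphi : is_lm_hom R S U V phi).

Lemma injective_off_class (x : X) :
  theta_injective U V phi x ->
  forall a b, ~ R x a -> phi a = phi b -> a = b.
Proof.
  intros Htheta a b Hxa Hab.
  destruct HM1 as [E1 [_ [SG1 [_ [LM1 _]]]]].
  destruct HM2 as [_ [_ [SG2 [_ [LM2 _]]]]].
  destruct Hphi as [Hrel Hhom].
  assert (Hxb : ~ R x b).
  { intro H. apply Hxa. rewrite H. apply Hrel. rewrite Hab. apply Hrel. reflexivity. }
  destruct (proj1 (proj2 (LM1 x)) a b Hxa Hxb) as [u [Uu Hu]].
  destruct (Hhom x u Uu) as [v [Vv Hv]].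
  assert (v_id : v = fun y => y).
  { apply (proj2 (proj2 (LM2 (phi x))) (phi a)).
    - intro H. apply Hxa. now apply Hrel.
    - exact Vv.
    - exact (proj1 (proj2 (SG2 (phi x)))).
    - now rewrite <- Hv, Hu. }
  subst v.
  assert (u_id : u = fun z => z).
  { apply (Htheta u (fun z => z) (fun y => y) Uu (proj1 (proj2 (SG1 x))));
      split; auto. }
  now rewrite <- Hu, u_id.
Qed.

Lemma injective_of_theta_injective (x : X) :
  theta_injective U V phi x -> injective phi.
Proof.
  intros Htheta a b Hab.
  destruct (classic (R x a)) as [Hxa|Hxa];
    [| exact (injective_off_class x Htheta a b Hxa Hab)].
  destruct HM1 as [E1 [[c1 [c2 [c3 [h12 [h13 h23]]]]] [SG1 [_ [LM1 _]]]]].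
  destruct (exists_classes_triangle X R E1 c1 c2 c3 h12 h13 h23 x)
    as [z [t [Hzx [Hzt Hxt]]]].
  assert (Hza : ~ R z a) by (intro H; apply Hzx; now rewrite H).
  destruct (proj1 (proj2 (LM1 z)) a t Hza Hzt) as [u [Uu Hu]].
  destruct (proj2 Hphi z u Uu) as [v [_ Hv]].
  assert (Huab : u a = u b).
  { apply (injective_off_class x Htheta).
    - now rewrite Hu.
    - now rewrite !Hv, Hab. }
  exact (proj1 (proj1 (SG1 z) u Uu) a b Huab).
Qed.

End LocalMoufangHomomorphism.

Theorem mainTheorem9 (X Y : Type) (R : X -> X -> Prop) (S : Y -> Y -> Prop)
  (U : X -> (X -> X) -> Prop) (V : Y -> (Y -> Y) -> Prop) (phi : X -> Y)
  (HM1 : is_local_moufang_set R U) (HM2 : is_local_moufang_set S V)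
  (Hphi : is_lm_hom R S U V phi) :
  (injective phi <-> forall x, theta_injective U V phi x) /\
  ((forall x, theta_injective U V phi x) <-> exists x, theta_injective U V phi x).
Proof.
  pose proof (injective_of_theta_injective X Y R S U V phi HM1 HM2 Hphi) as Hsome.
  destruct (proj1 (proj2 HM1)) as [x0 _].
  split; split.
  - apply theta_injective_of_injective.
  - intro Hall. exact (Hsome x0 (Hall x0)).
  - intro Hall. now exists x0.
  - intros [x Hx]. apply theta_injective_of_injective. exact (Hsome x Hx).
Qed.
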